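(* Let $a,q,t_1,\dots,t_m$ be complex numbers ($m\ge1$), let $F(z)=(1-az)\prod_{i=1}^{m}(1-t_iz)=\sum_{n\ge0}a_nz^n$, and for $k\ge0$ let $F_k(z)=\sum_{i=0}^ka_iz^i$ (so $F_k=F$ for $k\ge m+1$). Then $$\prod_{i=1}^{m}(1-t_iz)=\sum_{n=0}^\infty\frac{c_nz^{n}}{1-azq^n}$$ in $\mathbb{C}[[z]]$, where $c_0=1$ and for $n\ge1$, $$c_n=\sum_{k=0}^{\min\{m,n-1\}}g_{n-k}(q)\,q^{(n-k)k}\,[z^{n}]\Big\{\prod_{i=1}^{m}(1-t_iz)-\frac{F_k(z)}{1-az}\Big\},$$ with polynomials $g_n(q)$ ($n\ge1$) defined recursively by $g_n(q)=1-\sum_{i=1}^{n-1}g_{n-i}(q)\,q^{(n-i)i}$.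
   Context: $[z^m]\{f\}$ denotes the coefficient of $z^m$ in the formal power series $f$; $1/(1-az)$ and $1/(1-azq^n)$ are expanded as geometric series in $z$. Empty sums are $0$. *)

(* Complex numbers = R[i] (mathcomp-real-closed `complex`)
   over an arbitrary realType R (every realType is isomorphic to the reals). *)
From HB Require Import structures.
From mathcomp Require Import all_boot all_order all_algebra.
From mathcomp Require Import reals complex.
Set Implicit Arguments. Unset Strict Implicit. Unset Printing Implicit Defensive.
Import Order.TTheory GRing.Theory Num.Theory.
Local Open Scope ring_scope.

Section FPS.
Variable C : comRingType.

Definition fps := nat -> C.

Definition fps_of_poly (p : {poly C}) : fps := fun m => p`_m.

Definition fps_mul (f g : fps) : fps :=
  fun m => \sum_(i < m.+1) f i * g (m - i)%N.

Definition fps_sub (f g : fps) : fps := fun m => f m - g m.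

Definition fps_monom (c : C) (n : nat) : fps := fun m => if m == n then c else 0.

(* 1/(1 - b z) expanded as the geometric series sum_k b^k z^k. *)
Definition fps_geom (b : C) : fps := fun m => b ^+ m.

(* Sum of a family (u n)_{n>=0} of power series with u n = O(z^n)
   (z-adically summable): [z^m] of the sum is the finite sum over n <= m,
   since the terms with n > m contribute nothing to [z^m]. *)
Definition fps_sum_ord (u : nat -> fps) : fps :=
  fun m => \sum_(n < m.+1) u n m.

Definition poly_trunc (F : {poly C}) (k : nat) : {poly C} :=
  \sum_(i < k.+1) F`_i *: 'X^i.
End FPS.

Section Coeffs.
Variable C : comRingType.

(* gs q n = [:: g_1(q); ...; g_n(q)] with
   g_n(q) = 1 - sum_{i=1}^{n-1} g_{n-i}(q) q^{(n-i) i}. *)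
Fixpoint gs (q : C) (n : nat) : seq C :=
  match n with
  | 0 => [::]
  | n'.+1 =>
      let s := gs q n' in
      rcons s (1 - \sum_(1 <= i < n'.+1) nth 0 s (n'.+1 - i).-1 * q ^+ ((n'.+1 - i) * i))
  end.

Definition g (q : C) (n : nat) : C := nth 0 (gs q n) n.-1.

Definition Pt (m : nat) (t : 'I_m -> C) : {poly C} :=
  \prod_(i < m) (1 - t i *: 'X).

Definition Ft (m : nat) (a : C) (t : 'I_m -> C) : {poly C} :=
  (1 - a *: 'X) * Pt t.

Definition cn (m : nat) (a q : C) (t : 'I_m -> C) (n : nat) : C :=
  if n == 0%N then 1 else
  \sum_(k < (minn m n.-1).+1)
     g q (n - k) * q ^+ ((n - k) * k) *
     fps_sub (fps_of_poly (Pt t))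
             (fps_mul (fps_of_poly (poly_trunc (Ft a t) k)) (fps_geom a)) n.
End Coeffs.

From mathcomp Require Import all_boot all_algebra.
From mathcomp Require Import reals complex.
From mathcomp Require Import zify ring.

Set Implicit Arguments.
Unset Strict Implicit.
Unset Printing Implicit Defensive.

Import GRing.Theory.
Local Open Scope ring_scope.

(* Write f_j for the coefficients of F.  Since prod_i (1 - t_i z) = F(z)/(1 - az), its
   coefficient of z^M is sum_{j<=M} f_j a^(M-j), and the coefficient of z^n in
   prod_i (1 - t_i z) - F_k(z)/(1 - az) is sum_{k<j<=n} f_j a^(n-j).  Expanding [z^M]
   of the right-hand side and exchanging the sums, f_j a^(M-j) gets the coefficient
     sum_{j<=n<=M} q^(n(M-n)) sum_{k<j} g_{n-k}(q) q^((n-k)k),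
   so it suffices that this equals 1 for j >= 1 (the term c_0 = 1 supplies f_0 a^M).
   By the recursion for g, every row sum sum_{k<N} g_{N-k}(q) q^((N-k)k) equals 1 for
   N >= 1.  Passing from j to j + 1 removes the row n = j, worth q^(j(M-j)) if j >= 1
   and 0 otherwise, and adds the column k = j, which the substitution n = M - k' turns
   into q^(j(M-j)) times the row sum for N = M - j, i.e. q^(j(M-j)); induction on j
   concludes. *)

Section GWeights.
Variables (C : comNzRingType) (q : C).

Lemma size_gs n : size (gs q n) = n.
Proof. by elim: n => //= n IH; rewrite size_rcons IH. Qed.

Lemma nth_gs n k : (0 < k <= n)%N -> nth 0 (gs q n) k.-1 = g q k.
Proof.
elim: n => [|n IH] /andP[k0 kn]; first by lia.
have [->|kn1] := eqVneq k n.+1; first by [].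
rewrite /= nth_rcons size_gs ifT; last by lia.
by apply: IH; lia.
Qed.

Lemma g_rec n : (0 < n)%N ->
  g q n = 1 - \sum_(1 <= i < n) g q (n - i) * q ^+ ((n - i) * i).
Proof.
case: n => // n _; rewrite /g /= nth_rcons size_gs ltnn eqxx.
by congr (_ - _); apply: eq_big_nat => i /andP[i1 iN]; rewrite nth_gs //; lia.
Qed.

Definition g_weight n k := g q (n - k) * q ^+ ((n - k) * k).

Lemma sum_g_weight n : \sum_(0 <= k < n) g_weight n k = (n != 0%N)%:R.
Proof.
case: n => [|n]; first by rewrite big_geq.
by rewrite big_ltn // /g_weight subn0 muln0 expr0 mulr1 (@g_rec n.+1) // subrK.
Qed.

Lemma sum_g_weight_col M j :
  \sum_(j.+1 <= n < M.+1) q ^+ (n * (M - n)) * g_weight n j =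
  q ^+ (j * (M - j)) * \sum_(0 <= k < M - j) g_weight (M - j) k.
Proof.
rewrite big_distrr -{1}(add0n j.+1) big_addn big_nat_rev /= subSS.
apply: eq_big_nat => k /andP[_ kM]; rewrite add0n.
have -> : (M - j - k.+1 + j.+1 = M - k)%N by lia.
rewrite /g_weight (_ : (M - k - j = M - j - k)%N); last by lia.
by rewrite [LHS]mulrCA [RHS]mulrCA -!exprD; congr (_ * q ^+ _); nia.
Qed.

Lemma sum_g_weight_rect M j : (j <= M)%N ->
  \sum_(j <= n < M.+1) q ^+ (n * (M - n)) * \sum_(0 <= k < j) g_weight n k =
  (j != 0%N)%:R.
Proof.
elim: j => [|j IH] jM; first by rewrite big1 // => n _; rewrite big_geq ?mulr0.
move: (IH (ltnW jM)); rewrite big_ltn 1?ltnW // sum_g_weight => IHj.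
under eq_bigr => n _ do rewrite big_nat_recr //= mulrDr.
rewrite big_split /= sum_g_weight_col sum_g_weight.
have -> : (M - j != 0)%N by lia.
rewrite (canRL (addKr _) IHj) mulr1.
by case: j {IH IHj jM} => [|j]; rewrite /= ?mul0n ?mulr0 ?mulr1 ?oppr0 ?add0r // addrC addNKr.
Qed.

End GWeights.

Section Triangles.
Variable V : nmodType.

Lemma exchange_sum_triangle N (F : nat -> nat -> V) :
  \sum_(0 <= i < N) \sum_(0 <= j < i.+1) F i j =
  \sum_(0 <= j < N) \sum_(j <= i < N) F i j.
Proof.
elim: N => [|N IH]; first by rewrite !big_geq.
under [RHS]eq_big_nat => j /andP[_ jN] do rewrite big_nat_recr //=.
rewrite big_split /= [X in _ = X + _]big_nat_recr //= [X in _ = _ + X + _]big_geq // addr0.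
by rewrite big_nat_recr //= IH.
Qed.

Lemma exchange_sum_triangle_strict N (F : nat -> nat -> V) :
  \sum_(0 <= i < N) \sum_(i.+1 <= j < N) F i j =
  \sum_(0 <= j < N) \sum_(0 <= i < j) F i j.
Proof.
elim: N => [|N IH]; first by rewrite !big_geq.
rewrite big_nat_recr //= [X in _ + X]big_geq // addr0 [RHS]big_nat_recr //= -IH.
under eq_big_nat => i /andP[_ iN] do rewrite big_nat_recr //=.
by rewrite big_split.
Qed.

End Triangles.

Lemma sum_mul_tail (R : comPzSemiRingType) n (w h : nat -> R) :
  \sum_(0 <= k < n) w k * \sum_(k.+1 <= j < n.+1) h j =
  \sum_(0 <= j < n.+1) h j * \sum_(0 <= k < j) w k.
Proof.
under [RHS]eq_bigr do rewrite big_distrr /=.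
rewrite -exchange_sum_triangle_strict big_nat_recr //= [X in _ + X]big_geq // addr0.
by apply: eq_bigr => k _; rewrite big_distrr; apply: eq_bigr => j _; rewrite mulrC.
Qed.

Section PowerSeries.
Variable C : comNzRingType.

Lemma coef_monom_mul_geom (c b : C) n M : (n <= M)%N ->
  fps_mul (fps_monom c n) (fps_geom b) M = c * b ^+ (M - n).
Proof.
rewrite -ltnS => nM; rewrite /fps_mul (bigD1 (Ordinal nM)) //= /fps_monom eqxx.
rewrite big1 ?addr0 // => i ni; rewrite ifF ?mul0r //.
by apply: contraNF ni => /eqP i_n; apply/eqP/val_inj.
Qed.

Lemma coef_mul_geom_1subX (b : C) (p : {poly C}) n :
  fps_mul (fps_of_poly ((1 - b *: 'X) * p)) (fps_geom b) n = p`_n.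
Proof.
rewrite /fps_mul /fps_of_poly /fps_geom.
under eq_bigr => j _ do rewrite mulrBl mul1r -scalerAl coefB coefZ coefXM mulrBl.
rewrite sumrB big_ord_recr big_ord_recl /= subnn expr0 mulr1 mulr0 mul0r add0r.
rewrite [X in _ - X](eq_bigr (fun j : 'I_n => p`_j * b ^+ (n - j))).
  by rewrite addrAC subrr add0r.
by move=> j _; rewrite add0n /bump leq0n add1n -mulrA mulrCA -exprS subnSK.
Qed.

Lemma coef_poly_trunc (F : {poly C}) k j :
  (poly_trunc F k)`_j = if (j <= k)%N then F`_j else 0.
Proof. by rewrite /poly_trunc -poly_def coef_poly. Qed.

Lemma coef_mul_geom_sub_trunc (F : {poly C}) b k n :
  fps_mul (fps_of_poly F) (fps_geom b) n -
  fps_mul (fps_of_poly (poly_trunc F k)) (fps_geom b) n =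
  \sum_(k.+1 <= j < n.+1) F`_j * b ^+ (n - j).
Proof.
rewrite /fps_mul /fps_of_poly /fps_geom -sumrB big_geq_mkord [RHS]big_mkcond /=.
apply: eq_bigr => j _; rewrite coef_poly_trunc.
by case: leqP => _; rewrite ?subrr ?mul0r ?subr0.
Qed.

End PowerSeries.

Section Coefficients.
Variables (C : comNzRingType) (m : nat) (a : C) (t : 'I_m -> C).

Lemma size_1subZX (b : C) : (size (1 - b *: 'X)%R <= 2)%N.
Proof.
apply: leq_trans (size_polyD _ _) _; rewrite size_polyN geq_max size_poly1.
by rewrite (leq_trans (size_scale_leq _ _)) ?size_polyX.
Qed.

Lemma size_Pt : (size (Pt t) <= m.+1)%N.
Proof.
apply: leq_trans (size_poly_prod_leq _ _) _.
have : (\sum_(i < m) size (1 - t i *: 'X)%R <= \sum_(i < m) 2)%N.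
  by apply: leq_sum => i _; apply: size_1subZX.
by rewrite sum_nat_const card_ord leq_subLR addnS ltnS addnn -muln2.
Qed.

Lemma coef_Ft_gt j : (m.+1 < j)%N -> (Ft a t)`_j = 0.
Proof.
move=> mj; have /leq_sizeP -> // : (size (Ft a t) <= j)%N.
rewrite /Ft; apply: leq_trans (size_polyMleq _ _) _.
rewrite -subn1 leq_subLR; apply: leq_trans (leq_add (size_1subZX a) size_Pt) _; lia.
Qed.

Lemma coef_Ft0 : (Ft a t)`_0 = 1.
Proof.
rewrite coef0M coef0_prod big1 => [|i _]; last first.
  by rewrite coefB coef1 coefZ coefX mulr0 subr0.
by rewrite coefB coef1 coefZ coefX mulr0 subr0 mulr1.
Qed.

Lemma coef_Pt_mul_geom n :
  fps_of_poly (Pt t) n = fps_mul (fps_of_poly (Ft a t)) (fps_geom a) n.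
Proof. by rewrite coef_mul_geom_1subX. Qed.

Definition cn_sum q n :=
  \sum_(0 <= k < n) g_weight q n k * \sum_(k.+1 <= j < n.+1) (Ft a t)`_j * a ^+ (n - j).

Lemma cnE q n : cn a q t n = (n == 0)%:R + cn_sum q n.
Proof.
rewrite /cn /cn_sum; case: n => [|n]; first by rewrite big_geq ?addr0.
rewrite add0r [RHS](big_cat_nat _ (n := (minn m n).+1)) ?ltnS ?geq_minr //=.
rewrite [X in _ = _ + X]big1_seq ?addr0 => [|k]; last first.
  rewrite mem_index_iota => /andP[mk kn].
  rewrite big_nat big1 ?mulr0 // => j /andP[kj jn].
  by rewrite coef_Ft_gt ?mul0r //; move: mk kn kj jn; lia.
rewrite big_mkord; apply: eq_bigr => k _.
by rewrite /fps_sub coef_Pt_mul_geom coef_mul_geom_sub_trunc.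
Qed.

Lemma cn_sum_mul_geom q M n : (n <= M)%N ->
  cn_sum q n * (a * q ^+ n) ^+ (M - n) =
  \sum_(0 <= j < n.+1) q ^+ (n * (M - n)) *
    ((Ft a t)`_j * a ^+ (M - j) * \sum_(0 <= k < j) g_weight q n k).
Proof.
move=> nM; rewrite /cn_sum sum_mul_tail big_distrl.
apply: eq_big_nat => j /andP[_ jn] /=.
rewrite exprMn -exprM (_ : M - j = n - j + (M - n))%N ?exprD; last by lia.
ring.
Qed.

Lemma sum_cn_mul_geom q M :
  \sum_(n < M.+1) cn a q t n * (a * q ^+ n) ^+ (M - n) = fps_of_poly (Pt t) M.
Proof.
rewrite -(big_mkord xpredT (fun n => cn a q t n * (a * q ^+ n) ^+ (M - n))).
under eq_bigr do rewrite cnE mulrDl.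
rewrite big_split big_ltn //= mul1r subn0 expr0 mulr1.
rewrite [X in _ + X + _]big_nat big1 ?addr0 => [|n /andP[n0 _]]; last first.
  by rewrite eqn0Ngt n0 mul0r.
under eq_big_nat => n /andP[_ nM] do rewrite cn_sum_mul_geom //.
rewrite exchange_sum_triangle.
under eq_big_nat => j /andP[_ jM] do
  rewrite (eq_bigr _ (fun n _ => mulrCA _ _ _)) -big_distrr /= sum_g_weight_rect //.
rewrite coef_Pt_mul_geom /fps_mul /fps_of_poly /fps_geom.
rewrite -(big_mkord xpredT (fun j => (Ft a t)`_j * a ^+ (M - j))).
rewrite [in LHS]big_ltn // [RHS]big_ltn // coef_Ft0 subn0 mul1r mulr0 add0r.
by congr (_ + _); apply: eq_big_nat => j /andP[j0 _]; rewrite -lt0n j0 mulr1.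
Qed.

End Coefficients.

Theorem corollary2p5 (R : realType) (m : nat) (hm : (1 <= m)%N)
  (a q : R[i]) (t : 'I_m -> R[i]) :
  fps_of_poly (Pt t) =
  fps_sum_ord (fun n => fps_mul (fps_monom (cn a q t n) n) (fps_geom (a * q ^+ n))).
Proof.
apply: boolp.funext => M.
rewrite -(sum_cn_mul_geom a t q M); apply: eq_bigr => n _.
by rewrite coef_monom_mul_geom // -ltnS.
Qed.
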